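(* Let $C\subseteq\mathbb F_2^n$ be a classical linear code with parity check matrix $H$, let $\Gamma\subseteq2^{[n]}$, and let $\hat\Gamma=\{e\neq\emptyset: e\subseteq\gamma \text{ for some }\gamma\in\Gamma\}$. Then $\gamma_1\cup\gamma_2\in\Delta^{D}$ for all $\gamma_1,\gamma_2\in\Gamma$ if and only if $\mathrm{syn}(e_1)\neq0$ for all $e_1\in\hat\Gamma$ and $\mathrm{syn}(e_1+e_2)\neq0$ for all distinct $e_1,e_2\in\hat\Gamma$.
   Context: Vectors in $\mathbb F_2^n$ are identified with their support sets (so $e_1+e_2$ corresponds to symmetric difference). The syndrome is $\mathrm{syn}(e)=He$. $\Delta^{D}=\{\gamma\subseteq[n]: \mathrm{syn}(e)\neq0 \text{ for all nonzero } e \text{ with } \mathrm{supp}(e)\subseteq\gamma\}$. *)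

(* Vectors of F_2^n are identified with their supports
   (subsets of 'I_n); addition of vectors is symmetric difference. *)
From mathcomp Require Import all_boot all_order all_algebra.
Set Implicit Arguments. Unset Strict Implicit. Unset Printing Implicit Defensive.
Import GRing.Theory.
Local Open Scope ring_scope.

Definition vec_of (n : nat) (e : {set 'I_n}) : 'cV['F_2]_n :=
  \col_i (if i \in e then 1 else 0).

Definition syn (m n : nat) (H : 'M['F_2]_(m, n)) (e : {set 'I_n}) : 'cV['F_2]_m :=
  H *m vec_of e.

Definition symdiff (n : nat) (e1 e2 : {set 'I_n}) : {set 'I_n} :=
  (e1 :\: e2) :|: (e2 :\: e1).

Definition DeltaD (m n : nat) (H : 'M['F_2]_(m, n)) (gamma : {set 'I_n}) : Prop :=
  forall e : {set 'I_n}, e != set0 -> e \subset gamma -> syn H e != 0.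

Definition Gamma_hat (n : nat) (Gamma : {set {set 'I_n}}) : {set {set 'I_n}} :=
  [set e | (e != set0) && [exists g in Gamma, e \subset g]].

From mathcomp Require Import all_boot all_order all_algebra.
Set Implicit Arguments. Unset Strict Implicit. Unset Printing Implicit Defensive.
Local Open Scope ring_scope.

(* Every
   nonempty subset e of g1 :|: g2 is the sum of e :&: g1 and e :\: g1, which
   lie below g1 and g2 respectively, so it is either itself in Gamma_hat (when
   one part is empty) or the sum of two distinct elements of Gamma_hat;
   conversely the sum of two distinct elements of Gamma_hat is a nonempty
   subset of the union of the sets they lie below. *)

Section Supports.

Variable n : nat.
Implicit Types (e g : {set 'I_n}) (Gamma : {set {set 'I_n}}).

Lemma Gamma_hatP Gamma e :
  reflect (e != set0 /\ exists2 g, g \in Gamma & e \subset g)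
          (e \in Gamma_hat Gamma).
Proof. by rewrite inE; apply: (iffP andP) => -[-> /exists_inP]. Qed.

Lemma symdiff_eq0 e1 e2 : (symdiff e1 e2 == set0) = (e1 == e2).
Proof.
apply/eqP/eqP => [/setP E | ->]; last by rewrite /symdiff setDv setU0.
by apply/setP => x; move: (E x); rewrite !inE; case: (x \in e1); case: (x \in e2).
Qed.

Lemma symdiff_subU e1 e2 g1 g2 :
  e1 \subset g1 -> e2 \subset g2 -> symdiff e1 e2 \subset g1 :|: g2.
Proof.
move=> s1 s2; rewrite subUset; apply/andP.
split; apply: subset_trans (subsetDl _ _) _.
  exact: subset_trans s1 (subsetUl _ _).
exact: subset_trans s2 (subsetUr _ _).
Qed.

Lemma symdiff_setID e g : symdiff (e :&: g) (e :\: g) = e.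
Proof. by apply/setP => x; rewrite /symdiff !inE; case: (x \in e); case: (x \in g). Qed.

Lemma subsetU_Gamma_hat Gamma g1 g2 e :
  g1 \in Gamma -> g2 \in Gamma -> e != set0 -> e \subset g1 :|: g2 ->
  e \in Gamma_hat Gamma \/
  exists e1 e2, [/\ e1 \in Gamma_hat Gamma, e2 \in Gamma_hat Gamma,
                    e1 != e2 & e = symdiff e1 e2].
Proof.
move=> g1G g2G e_n0 e_sub.
have s1 : e :&: g1 \subset g1 by exact: subsetIr.
have s2 : e :\: g1 \subset g2 by rewrite subDset.
have [E1 | E1_n0] := eqVneq (e :&: g1) set0.
  have e_eq : e = e :\: g1 by rewrite -{1}(setID e g1) E1 set0U.
  by left; apply/Gamma_hatP; split; last (exists g2; rewrite // e_eq).
have [E2 | E2_n0] := eqVneq (e :\: g1) set0.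
  have e_eq : e = e :&: g1 by rewrite -{1}(setID e g1) E2 setU0.
  by left; apply/Gamma_hatP; split; last (exists g1; rewrite // e_eq).
right; exists (e :&: g1), (e :\: g1); split; last by rewrite symdiff_setID.
- by apply/Gamma_hatP; split; last exists g1.
- by apply/Gamma_hatP; split; last exists g2.
- by rewrite -symdiff_eq0 symdiff_setID.
Qed.

End Supports.

Theorem lemma12 (m n : nat) (H : 'M['F_2]_(m, n)) (Gamma : {set {set 'I_n}}) :
  (forall g1 g2, g1 \in Gamma -> g2 \in Gamma -> DeltaD H (g1 :|: g2)) <->
  ((forall e1, e1 \in Gamma_hat Gamma -> syn H e1 != 0) /\
   (forall e1 e2, e1 \in Gamma_hat Gamma -> e2 \in Gamma_hat Gamma ->
      e1 != e2 -> syn H (symdiff e1 e2) != 0)).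
Proof.
split=> [D | [single pair] g1 g2 g1G g2G e e_n0 e_sub].
  split=> [e1 /Gamma_hatP[e1_n0 [g gG s]] | e1 e2 /Gamma_hatP[_ [g1 g1G s1]]
             /Gamma_hatP[_ [g2 g2G s2]] neq].
    by apply: (D g g) => //; rewrite setUid.
  by apply: (D g1 g2) => //; [rewrite symdiff_eq0 | exact: symdiff_subU].
have [|[e1 [e2 [e1G e2G neq ->]]]] := subsetU_Gamma_hat g1G g2G e_n0 e_sub.
  exact: single.
exact: pair.
Qed.
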